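(* Let $n$ be an odd integer. If an edge-coloring of a complete graph contains no rainbow $n$-cycle, then it contains no rainbow $m$-cycle for every integer $m \ge n^3/2$.
   Context: A coloring is an arbitrary (not necessarily proper) assignment of colors, from an arbitrary set, to the edges of an undirected complete graph; the graph may be finite or infinite. A rainbow $n$-cycle is a cycle through $n$ distinct vertices whose $n$ edges all receive pairwise distinct colors. *)

From mathcomp Require Import all_boot.
Set Implicit Arguments. Unset Strict Implicit. Unset Printing Implicit Defensive.

(* An edge-coloring of the complete graph on vertex set V (finite or infinite)
   with colors from an arbitrary type C: a function on pairs of vertices which
   is symmetric (so it is a function of the unordered edge {x,y}); its values on
   the diagonal are irrelevant (loops are not edges). *)
Definition edge_coloring (V C : Type) (c : V -> V -> C) : Prop :=
  forall x y : V, c x y = c y x.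

Definition rainbow_cycle (V C : Type) (c : V -> V -> C) (n : nat) : Prop :=
  3 <= n /\
  exists v : 'I_n -> V,
    injective v /\ injective (fun i : 'I_n => c (v i) (v (ordS i))).

From mathcomp Require Import all_boot zify.
From Stdlib Require Import Classical.
Set Implicit Arguments. Unset Strict Implicit. Unset Printing Implicit Defensive.

(* Write n = 2g + 1 and call k bad when there is no rainbow (k + 2)-cycle.  A
   chord of a rainbow cycle splits it into two cycles, one of which is rainbow,
   so bad numbers are closed under addition; d = n - 2 is bad.
   Cut a rainbow cycle of length L = n g into n blocks of g consecutive edges.
   A chord spanning two consecutive blocks must repeat the colour of an edge of
   one of them, or it would close a rainbow n-cycle.  If the chord over blocks
   (i, i+1) takes its colour from block i while the chord over (i+1, i+2) takes
   it from block i+2, the two chords reroute the cycle into a rainbow cycle of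
   length L - 2g + 2 = g d + 2, which is excluded.  Hence all these chords take
   their colour from the same relative block, and the chords joining every
   second block boundary form a rainbow n-cycle.  So e = n g - 2 is bad too, and
   since e + 1 = (g + 1) d, every number beyond (2g^2 - 1) d, in particular
   m - 2 for 2m >= n^3, is a sum of copies of d and e. *)

Section AddClosed.

Variable P : nat -> Prop.
Hypothesis P_add : forall x y, 0 < x -> 0 < y -> P x -> P y -> P (x + y).

Lemma add_closed_mul x k : 0 < x -> 0 < k -> P x -> P (k * x).
Proof.
move=> x0 + Px; elim: k => // [[_ _|k IH _]]; first by rewrite mul1n.
by rewrite mulSn; apply: P_add => //; [rewrite muln_gt0 x0 | exact: IH].
Qed.

Lemma add_closed_ge d e t N :
  0 < d -> 0 < e -> P d -> P e -> e.+1 = t * d ->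
  (d.-1 * t).+1 * d <= N -> P N.
Proof.
move=> d0 e0 Pd Pe et dN.
move: (divn_eq N d) (ltn_pmod N d0) dN; move: (N %/ d) (N %% d) => q r -> rd dN.
have qt : d.-1 * t < q.
  by rewrite -ltnS -(ltn_pmul2r d0); apply: leq_ltn_trans dN _; rewrite mulSn; lia.
have [r0|r0] := posnP r.
  by rewrite r0 addn0; apply: add_closed_mul => //; apply: leq_ltn_trans qt.
have jt : (d - r) * t <= q.
  by rewrite (leq_trans _ (ltnW qt)) // leq_mul2r; apply/orP; right; lia.
have je : (d - r) * e + (d - r) = (d - r) * t * d by rewrite -mulnSr et mulnA.
have -> : q * d + r = (q.+1 - (d - r) * t) * d + (d - r) * e.
  rewrite mulnBl mulSn.
  have : (d - r) * t * d <= q * d by rewrite leq_mul2r jt orbT.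
  lia.
apply: P_add.
- by rewrite muln_gt0 subn_gt0 ltnS jt d0.
- by rewrite muln_gt0 subn_gt0 rd e0.
- by apply: add_closed_mul; rewrite ?subn_gt0 ?ltnS.
- by apply: add_closed_mul; rewrite ?subn_gt0.
Qed.

End AddClosed.

Lemma odd_double_mod_inj n i j :
  odd n -> i < n -> j < n -> 2 * i = 2 * j %[mod n] -> i = j.
Proof.
move=> n_odd.
wlog ij : i j / i <= j.
  by move=> W ilt jlt E; case: (leqP i j) => h; [exact: W | apply/esym/W; lia].
move=> ilt jlt /eqP; rewrite eq_sym eqn_mod_dvd ?leq_mul2l ?ij ?orbT //.
rewrite -mulnBr Gauss_dvdr ?coprimen2 // => dvd_n.
by case: (posnP (j - i)) => [|/dvdn_leq/(_ dvd_n)]; lia.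
Qed.

Lemma modn_block n g a e : 0 < g -> e < g -> (a * g + e) %% (n * g) = a %% n * g + e.
Proof.
move=> g0 eg; case: (posnP n) => [->|n0]; first by rewrite !modn0.
rewrite {1}(divn_eq a n) mulnDl -mulnA -addnA modnMDl modn_small //.
by have := ltn_pmod a n0; nia.
Qed.

Section Rainbow.

Variables (V C : Type) (c : V -> V -> C).
Hypothesis c_sym : edge_coloring c.

Lemma rainbow_cycle_of_closed_walk k (w : nat -> V) :
  3 <= k -> w k = w 0 ->
  (forall i j, i < k -> j < k -> w i = w j -> i = j) ->
  (forall i j, i < k -> j < k -> c (w i) (w i.+1) = c (w j) (w j.+1) -> i = j) ->
  rainbow_cycle c k.
Proof.
move=> k3 closed w_inj col_inj; split=> //.
have wS i : i < k -> w (i.+1 %% k) = w i.+1.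
  case: (ltnP i.+1 k) => [/modn_small -> //|ik ilt].
  have -> : i.+1 = k by lia.
  by rewrite modnn closed.
exists (fun i : 'I_k => w i); split=> i j /=.
  by move/(w_inj _ _ (ltn_ord i) (ltn_ord j))/val_inj.
by rewrite !wS // => /(col_inj _ _ (ltn_ord i) (ltn_ord j))/val_inj.
Qed.

Definition edge_col (u : nat -> V) i := c (u i) (u i.+1).

(* A rainbow L-cycle unrolled into an L-periodic sequence of vertices. *)
Definition rainbow_loop L (u : nat -> V) :=
  [/\ 0 < L, forall i, u (i %% L) = u i,
      forall i j, u i = u j -> i = j %[mod L] &
      forall i j, edge_col u i = edge_col u j -> i = j %[mod L]].

Lemma rainbow_cycle_loop L : rainbow_cycle c L -> exists u, rainbow_loop L u.
Proof.
case=> L3 [v [v_inj col_inj]]; have L0 : 0 < L by lia.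
pose o i : 'I_L := Ordinal (ltn_pmod i L0).
have oS i : o i.+1 = ordS (o i).
  by apply: val_inj; rewrite /= -[in RHS]addn1 modnDml addn1.
exists (fun i => v (o i)); split=> // [i|i j /v_inj/(congr1 val) //|i j].
  by congr v; apply: val_inj; rewrite /= modn_mod.
by rewrite /edge_col !oS => /col_inj/(congr1 val).
Qed.

Definition chord_in_block (u : nat -> V) g a k :=
  exists2 e, e < g & c (u a) (u (a + 2 * g)) = edge_col u (a + k * g + e).

Section Loop.

Variables (L : nat) (u : nat -> V).
Hypothesis uL : rainbow_loop L u.

Lemma loop_mod i : u (i %% L) = u i.
Proof. by case: uL. Qed.

Lemma loop_addL i : u (i + L) = u i.
Proof. by rewrite -loop_mod modnDr loop_mod. Qed.

Lemma loop_L : u L = u 0.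
Proof. by rewrite -[L]add0n loop_addL. Qed.

Lemma loop_inj i j : i < L -> j < L -> u i = u j -> i = j.
Proof. by case: uL => _ _ inj _ ilt jlt /inj; rewrite !modn_small. Qed.

Lemma edge_col_inj i j : i < L -> j < L -> edge_col u i = edge_col u j -> i = j.
Proof. by case: uL => _ _ _ inj ilt jlt /inj; rewrite !modn_small. Qed.

Lemma edge_col_mod i : edge_col u (i %% L) = edge_col u i.
Proof.
rewrite /edge_col loop_mod -[in RHS](loop_mod i.+1) -[in RHS]addn1 -modnDml.
by rewrite addn1 loop_mod.
Qed.

Lemma edge_col_addL i : edge_col u (i + L) = edge_col u i.
Proof. by rewrite -edge_col_mod modnDr edge_col_mod. Qed.

Lemma loop_rot a : rainbow_loop L (fun i => u (a + i)).
Proof.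
case: uL => L0 _ v_inj col_inj; split=> // [i|i j|i j].
- by rewrite -loop_mod modnDmr loop_mod.
- by move/v_inj/eqP; rewrite eqn_modDl => /eqP.
- by rewrite /edge_col !addnS => /col_inj/eqP; rewrite eqn_modDl => /eqP.
Qed.

Lemma chord_on_arc s : 2 <= s -> s < L ->
  rainbow_cycle c s.+1 \/ exists2 i, i < s & c (u 0) (u s) = edge_col u i.
Proof.
move=> s2 sL.
case: (classic (exists2 i, i < s & c (u 0) (u s) = edge_col u i)) => [|no_hit];
  [by right | left].
pose w i := if i == s.+1 then u 0 else u i.
have wE i : i <= s -> w i = u i by move=> ?; rewrite /w ifF //; apply/eqP; lia.
have wS i : i < s.+1 -> c (w i) (w i.+1) = if i < s then edge_col u i else c (u 0) (u s).
  move=> ilt; rewrite wE; last by lia.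
  case: ltnP => [i_s|s_i]; first by rewrite wE.
  have -> : i = s by lia.
  by rewrite /w eqxx c_sym.
apply: (@rainbow_cycle_of_closed_walk _ w) => // [|i j ilt jlt|i j ilt jlt].
- by rewrite /w eqxx.
- by rewrite !wE; [apply: loop_inj | ..]; lia.
rewrite !wS //; case: ltnP => i_s; case: ltnP => j_s.
- by apply: edge_col_inj; lia.
- by move=> E; case: no_hit; exists i.
- by move=> E; case: no_hit; exists j; rewrite -?E.
- lia.
Qed.

Lemma crossing_chords_rainbow p q r e1 e2 :
  q < p -> p < r < L -> e1 < q -> p <= e2 < r ->
  c (u 0) (u p) = edge_col u e1 -> c (u q) (u r) = edge_col u e2 ->
  rainbow_cycle c (L - r + p - q + 2).
Proof.
move=> qp /andP[pr rL] e1q /andP[pe2 e2r] E1 E2.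
set k := L - r + p - q + 2; set b := p - q + 1.
(* The walk 0, p, p-1, ..., q, r, r+1, ..., L-1 visits u (f i) at step i; step i
   has the colour of edge h i of the original cycle. *)
pose f (i : nat) := if i == 0 then 0 else if i <= b then p.+1 - i else i + r - b.+1.
pose h (i : nat) := if i == 0 then e1 else if i < b then p - i else if i == b then e2 else f i.
have fM i : 0 < i <= b -> f i = p.+1 - i.
  by case/andP=> i0 ib; rewrite /f eqn0Ngt i0 ib.
have fH i : b < i -> f i = i + r - b.+1.
  by move=> bi; rewrite /f eqn0Ngt (leq_ltn_trans (leq0n b) bi) leqNgt bi.
have f_spec i : (i = 0 /\ f i = 0) \/ (0 < i <= b /\ f i = p.+1 - i) \/
                (b < i /\ f i = i + r - b.+1).
  case: (posnP i) => [->|i0]; first by left.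
  by case: (leqP i b) => ib; right; [left; rewrite fM ?i0 | right; rewrite fH].
have h_spec i : (i = 0 /\ h i = e1) \/ (0 < i < b /\ h i = p - i) \/
                (i = b /\ h i = e2) \/ (b < i /\ h i = i + r - b.+1).
  rewrite /h; case: (posnP i) => [->|i0]; first by left.
  case: (ltngtP i b) => [ib|bi|->]; [by right; left | | by right; right; left].
  by rewrite fH //; do 3 right.
have f_lt i : i < k -> f i < L by have := f_spec i; lia.
have h_lt i : i < k -> h i < L by have := h_spec i; lia.
have walk i : i < k -> c (u (f i)) (u (f i.+1)) = edge_col u (h i).
  move=> ik; case: (h_spec i) => [[-> ->]|[[/andP[i0 ib] ->]|[[-> ->]|[bi ->]]]].
  - by rewrite (fM 1) ?subn1 /=; [exact: E1 | lia].
  - by rewrite !fM ?i0 ?(ltnW ib) // c_sym /edge_col; congr c; congr u; lia.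
  - rewrite fM ?fH ?leqnn; try lia.
    have -> : p.+1 - b = q by lia.
    by rewrite addKn.
  - have bi1 : b < i.+1 by lia.
    by rewrite !fH // /edge_col; congr (c _ (u _)); lia.
apply: (@rainbow_cycle_of_closed_walk _ (fun i => u (f i))) => [|||i j ik jk].
- lia.
- have kL : k + r - b.+1 = L by lia.
  by rewrite fH ?kL ?loop_L //; lia.
- move=> i j ik jk /(loop_inj (f_lt _ ik) (f_lt _ jk)).
  by have := f_spec i; have := f_spec j; lia.
rewrite !walk // => /(edge_col_inj (h_lt _ ik) (h_lt _ jk)).
by have := h_spec i; have := h_spec j; lia.
Qed.

Lemma block_chords_rainbow g d : 0 < g -> L = (2 * g).+1 * g ->
  (forall y, y < (2 * g).+1 -> chord_in_block u g (y * g) d) ->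
  rainbow_cycle c (2 * g).+1.
Proof.
move=> g0 Lg.
have n_odd : odd (2 * g).+1 by rewrite /= oddM.
have n3 : 3 <= (2 * g).+1 by lia.
move: (2 * g).+1 Lg n_odd n3 => n L_ng n_odd n3 chords.
have n0 : 0 < n by lia.
have vertex_lt a : a %% n * g < L by rewrite L_ng ltn_pmul2r // ltn_pmod.
have block_lt a e : e < g -> a %% n * g + e < L.
  by move=> eg; rewrite L_ng; have := ltn_pmod a n0; nia.
have edge_block j : exists2 e, e < g &
    c (u (2 * j %% n * g)) (u (2 * j.+1 %% n * g)) = edge_col u ((2 * j + d) %% n * g + e).
  have [e eg E] := chords _ (ltn_pmod (2 * j) n0).
  exists e => //.
  have -> : 2 * j.+1 %% n * g = (2 * j %% n * g + 2 * g) %% L.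
    by rewrite L_ng -mulnDl -muln_modl modnDml mulnSr.
  by rewrite loop_mod E -edge_col_mod L_ng -mulnDl modn_block // modnDml.
apply: (@rainbow_cycle_of_closed_walk _ (fun j => u (2 * j %% n * g)))
  => // [|i j i_n j_n|i j i_n j_n].
- by rewrite modnMl muln0 mod0n.
- move/(loop_inj (vertex_lt _) (vertex_lt _))/eqP; rewrite eqn_pmul2r // => /eqP.
  exact: odd_double_mod_inj.
have [ei eig ->] := edge_block i; have [ej ejg ->] := edge_block j.
move/(edge_col_inj (block_lt _ _ eig) (block_lt _ _ ejg))/(congr1 (divn^~ g)).
rewrite !divnMDl // !divn_small // !addn0 => /eqP; rewrite eqn_modDr => /eqP.
exact: odd_double_mod_inj.
Qed.

End Loop.

Lemma edge_col_rot (u : nat -> V) a i :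
  edge_col (fun j => u (a + j)) i = edge_col u (a + i).
Proof. by rewrite /edge_col addnS. Qed.

Lemma rainbow_cycle_split l s : rainbow_cycle c l -> 2 <= s -> s + 2 <= l ->
  rainbow_cycle c s.+1 \/ rainbow_cycle c (l - s).+1.
Proof.
move=> /rainbow_cycle_loop[u uL] s2 sl.
have s_l : s < l by lia.
have [Rs|[i i_s E1]] := chord_on_arc uL s2 s_l; first by left.
have ls2 : 2 <= l - s by lia.
have ls_l : l - s < l by lia.
have [Rls|[j j_s]] := chord_on_arc (loop_rot uL s) ls2 ls_l; first by right.
rewrite edge_col_rot addn0 subnKC ?(loop_L uL) 1?c_sym ?E1; last by lia.
by move/(edge_col_inj uL); lia.
Qed.

Lemma no_rainbow_add x y : 0 < x -> 0 < y ->
  ~ rainbow_cycle c (x + 2) -> ~ rainbow_cycle c (y + 2) ->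
  ~ rainbow_cycle c (x + y + 2).
Proof.
move=> x0 y0 no_x no_y R.
have x2 : 2 <= x.+1 by lia.
have xy : x.+1 + 2 <= x + y + 2 by lia.
have [Rx|Ry] := rainbow_cycle_split R x2 xy.
- by apply: no_x; rewrite addn2.
- by apply: no_y; rewrite (_ : y + 2 = (x + y + 2 - x.+1).+1) //; lia.
Qed.

Section Blocks.

Variables (L : nat) (u : nat -> V) (g : nat).
Hypothesis uL : rainbow_loop L u.
Hypotheses (g0 : 0 < g) (gL : 3 * g < L).
Hypothesis no_short : ~ rainbow_cycle c (2 * g).+1.
Hypothesis no_long : ~ rainbow_cycle c (L - 2 * g + 2).

Lemma chord_in_block_addL a k : chord_in_block u g (a + L) k -> chord_in_block u g a k.
Proof.
case=> e eg E; exists e => //; move: E.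
by rewrite !(addnAC _ L) !(loop_addL uL) (edge_col_addL uL).
Qed.

Lemma chord_in_block_located a : chord_in_block u g a 0 \/ chord_in_block u g a 1.
Proof.
have g2 : 2 <= 2 * g by lia.
have gL2 : 2 * g < L by lia.
have [/no_short []|[i ig E]] := chord_on_arc (loop_rot uL a) g2 gL2.
rewrite edge_col_rot addn0 in E.
case: (ltnP i g) => [ig'|gi]; [left; exists i | right; exists (i - g)] => //; try lia.
- by rewrite mul0n addn0.
- by rewrite mul1n -addnA subnKC.
Qed.

Lemma chord_in_block_cross a : chord_in_block u g a 0 -> chord_in_block u g (a + g) 1 ->
  rainbow_cycle c (L - 2 * g + 2).
Proof.
move=> [e1 e1g E1] [e2 e2g E2].
have := crossing_chords_rainbow (loop_rot uL a) (p := 2 * g) (q := g) (r := 3 * g)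
  (e1 := e1) (e2 := 2 * g + e2).
rewrite (_ : L - 3 * g + 2 * g - g + 2 = L - 2 * g + 2); last by lia.
apply; rewrite ?edge_col_rot; try lia.
- by rewrite addn0 E1 mul0n addn0.
- have -> : a + 3 * g = a + g + 2 * g by lia.
  by rewrite E2; congr edge_col; lia.
Qed.

Lemma chord_in_block_step a : chord_in_block u g a 0 -> chord_in_block u g (a + g) 0.
Proof.
move=> early; have [//|late] := chord_in_block_located (a + g).
by case: no_long; apply: chord_in_block_cross late.
Qed.

Lemma chord_in_block_iter a y : chord_in_block u g a 0 -> chord_in_block u g (a + y * g) 0.
Proof.
move=> early; elim: y => [|y IH]; first by rewrite addn0.
by rewrite mulSnr addnA; apply: chord_in_block_step.
Qed.

Hypothesis Lg : L = (2 * g).+1 * g.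

Lemma chord_in_block_uniform :
  exists d, forall y, y < (2 * g).+1 -> chord_in_block u g (y * g) d.
Proof.
case: (classic (chord_in_block u g 0 0)) => [early0|late0].
  by exists 0 => y _; have := chord_in_block_iter y early0; rewrite add0n.
exists 1 => y yn; have [early|//] := chord_in_block_located (y * g).
case: late0; apply: chord_in_block_addL; rewrite add0n Lg.
by have := chord_in_block_iter ((2 * g).+1 - y) early; rewrite -mulnDl subnKC // ltnW.
Qed.

End Blocks.

Lemma no_rainbow_block_cycle g : 0 < g -> ~ rainbow_cycle c (2 * g).+1 ->
  ~ rainbow_cycle c (g * (2 * g - 1) + 2) -> ~ rainbow_cycle c ((2 * g).+1 * g).
Proof.
move=> g0 no_short no_long; have [g1|g1] := eqVneq g 1; first by subst g; rewrite muln1.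
move=> /rainbow_cycle_loop[u uL].
have gL : 3 * g < (2 * g).+1 * g by rewrite ltn_pmul2r //; lia.
have no_long' : ~ rainbow_cycle c ((2 * g).+1 * g - 2 * g + 2).
  by rewrite (_ : (2 * g).+1 * g - 2 * g + 2 = g * (2 * g - 1) + 2); last nia.
have [d chords] := chord_in_block_uniform uL g0 gL no_short no_long' erefl.
exact/no_short/(block_chords_rainbow uL g0 erefl chords).
Qed.

End Rainbow.

Theorem theorem8 (V C : Type) (c : V -> V -> C) (n : nat) :
  3 <= n -> odd n -> edge_coloring c ->
  ~ rainbow_cycle c n ->
  forall m : nat, n ^ 3 <= 2 * m -> ~ rainbow_cycle c m.
Proof.
move=> n3 n_odd c_sym no_n m nm.
have [g n_eq] : exists g, n = (2 * g).+1.
  by exists n./2; rewrite -[LHS]odd_double_half n_odd -muln2 mulnC.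
subst n; have g0 : 0 < g by lia.
pose P k := ~ rainbow_cycle c (k + 2).
have P_add : forall x y, 0 < x -> 0 < y -> P x -> P y -> P (x + y).
  exact: no_rainbow_add.
have Pd : P (2 * g - 1).
  by rewrite /P (_ : 2 * g - 1 + 2 = (2 * g).+1); last lia.
have Pdg : P (g * (2 * g - 1)) by apply: (add_closed_mul P_add) => //; lia.
have Pe : P ((2 * g).+1 * g - 2).
  by rewrite /P subnK; [exact: no_rainbow_block_cycle | nia].
have := add_closed_ge P_add (t := g.+1) (N := m - 2) _ _ Pd Pe.
rewrite /P subnK; last by nia.
apply; nia.
Qed.
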